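(* Let $\mathcal{X}$ be a finite set of $n$ items and let $\mathcal{S}$ be a collection of distinct subsets of $\mathcal{X}$, each of size at least $2$. Let $G(\mathcal{S})$ be the integer matrix with one row $g_{x,C}^{T}$ for each $C\in\mathcal{S}$ and each $x\in C$. Then the full-rank CDM is identifiable up to a shift from the choice probabilities on $\mathcal{S}$ — i.e. whenever $u,u'\in\mathbb{R}^{n(n-1)}$ satisfy $P_u(x\mid C)=P_{u'}(x\mid C)$ for all $C\in\mathcal{S}$, $x\in C$, we have $u'-u=\alpha\mathbf{1}$ for some $\alpha\in\mathbb{R}$ — if and only if $\mathrm{rank}(G(\mathcal{S}))=n(n-1)-1$.
   Context: A (full-rank) CDM on $\mathcal{X}$ has parameter vector $u=(u_{xz})_{x\neq z}\in\mathbb{R}^{n(n-1)}$ and choice probabilities, for $C\subseteq\mathcal{X}$, $|C|\ge2$, $x\in C$, $P_u(x\mid C)=\dfrac{\exp\big(\sum_{z\in C\setminus\{x\}}u_{xz}\big)}{\sum_{y\in C}\exp\big(\sum_{z\in C\setminus\{y\}}u_{yz}\big)}$. For a set $C$ and $x\in C$, $g_{x,C}\in\mathbb{Z}^{n(n-1)}$ is the integer vector with $g_{x,C}^{T}u=\sum_{y\in C\setminus\{x\}}\Big([u_{xy}-u_{yx}]+\sum_{z\in C\setminus\{x,y\}}[u_{xz}-u_{yz}]\Big)$ for all $u$. $\mathbf{1}$ denotes the all-ones vector. *)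

From HB Require Import structures.
From mathcomp Require Import all_boot all_order all_algebra.
From mathcomp Require Import reals.
From mathcomp Require Import sequences exp.
Set Implicit Arguments. Unset Strict Implicit. Unset Printing Implicit Defensive.
Import Order.TTheory GRing.Theory Num.Theory.
Local Open Scope ring_scope.

(* Index set of the CDM parameters: ordered pairs (x, z) with x <> z.
   Its cardinality is n(n-1). *)
Notation offdiag X := {p : X * X | p.1 != p.2}.

(* Read parameter u_{xz} (value 0 on the diagonal, which never occurs below). *)
Definition upar (X : finType) (R : nmodType) (u : offdiag X -> R) (x z : X) : R :=
  match @insub _ (fun p : X * X => p.1 != p.2) _ (x, z) with
  | Some d => u d
  | None => 0
  end.

Definition cdmP (R : realType) (X : finType) (u : offdiag X -> R)
    (C : {set X}) (x : X) : R :=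
  expR (\sum_(z in C :\ x) upar u x z) /
  \sum_(y in C) expR (\sum_(z in C :\ y) upar u y z).

Definition glin (R : zmodType) (X : finType) (C : {set X}) (x : X)
    (u : X -> X -> R) : R :=
  \sum_(y in C :\ x)
    ((u x y - u y x) + \sum_(z in C :\ x :\ y) (u x z - u y z)).

(* The integer vector g_{x,C}: its coordinate at (a,b) is the coefficient of
   u_{ab} in the linear form above. *)
Definition gvec (X : finType) (C : {set X}) (x : X) (d : offdiag X) : int :=
  glin C x (fun a b : X => if (a, b) == val d then 1 else 0).

Notation rowidx X S :=
  {p : {set X} * X | (p.1 \in S) && (p.2 \in p.1)}.

Definition Gmat (X : finType) (S : {set {set X}}) :
    'M[int]_(#|{: rowidx X S}|, #|{: offdiag X}|) :=
  \matrix_(i, j) gvec (val (enum_val i)).1 (val (enum_val i)).2 (enum_val j).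

(** P_u(. | C) is the softmax over C of the utilities
    U_u(x, C) = sum_(z in C, z <> x) u_xz, and a softmax determines its
    argument up to an additive constant.  Since
    g_(x,C)^T u = |C| U_u(x, C) - sum_(y in C) U_u(y, C), the parameters u and
    u' induce the same probabilities on S exactly when u' - u lies in the
    kernel of G(S).  The all-ones vector always lies in that kernel, so
    identifiability up to a shift says that the kernel is the line spanned by
    1, i.e. that G(S) has rank n(n-1) - 1. *)
From HB Require Import structures.
From mathcomp Require Import all_boot all_order all_algebra.
From mathcomp Require Import reals.
From mathcomp Require Import sequences exp.
From mathcomp Require Import ring zify.
Import Order.TTheory GRing.Theory Num.Theory.
Local Open Scope ring_scope.

Definition utility {R : nmodType} {X : finType} (u : X -> X -> R)
    (C : {set X}) (x : X) : R :=
  \sum_(z in C :\ x) u x z.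

Section LinearForm.
Context {X : finType}.

Lemma glin_utility {R : zmodType} (u : X -> X -> R) (C : {set X}) (x : X) :
  x \in C -> glin C x u = \sum_(y in C) (utility u C x - utility u C y).
Proof.
move=> xC; rewrite (big_setD1 x xC) /= subrr add0r /glin.
apply: eq_bigr => y; rewrite in_setD1 => /andP [yx yC].
have yCx : y \in C :\ x by rewrite in_setD1 yx yC.
have xCy : x \in C :\ y by rewrite in_setD1 eq_sym yx xC.
have -> : utility u C x = u x y + \sum_(z in C :\ x :\ y) u x z.
  by rewrite /utility (big_setD1 y yCx).
have -> : utility u C y = u y x + \sum_(z in C :\ x :\ y) u y z.
  rewrite /utility (big_setD1 x xCy); congr (_ + _).
  by apply: eq_bigl => z; rewrite !in_setD1 andbCA.
by rewrite sumrB opprD addrACA.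
Qed.

Lemma eq_glin {R : zmodType} (C : {set X}) (x : X) (u v : X -> X -> R) :
  u =2 v -> glin C x u = glin C x v.
Proof.
move=> uv; rewrite /glin; apply: eq_bigr => y _; rewrite !uv; congr (_ + _).
by apply: eq_bigr => z _; rewrite !uv.
Qed.

Lemma raddf_glin {U V : zmodType} (f : {additive U -> V}) (C : {set X}) (x : X)
    (u : X -> X -> U) :
  f (glin C x u) = glin C x (fun a b => f (u a b)).
Proof.
rewrite /glin raddf_sum; apply: eq_bigr => y _.
rewrite raddfD raddfB raddf_sum; congr (_ + _).
by apply: eq_bigr => z _; rewrite raddfB.
Qed.

Lemma glin_sum {R : zmodType} (I : finType) (C : {set X}) (x : X)
    (F : I -> X -> X -> R) :
  glin C x (fun a b => \sum_i F i a b) = \sum_i glin C x (F i).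
Proof.
rewrite /glin [RHS]exchange_big; apply: eq_bigr => y _ /=.
rewrite [RHS]big_split /=; congr (_ + _); first by rewrite sumrB.
by rewrite [RHS]exchange_big; apply: eq_bigr => z _; rewrite sumrB.
Qed.

Lemma glin_eq0P {R : numDomainType} (u : X -> X -> R) (C : {set X}) :
  (forall x, x \in C -> glin C x u = 0) <->
  {in C &, forall x y, utility u C x = utility u C y}.
Proof.
split=> [glin0 x y xC yC | Ucst x xC]; last first.
  by rewrite glin_utility //; apply: big1 => y yC; rewrite (Ucst x y) ?subrr.
have : glin C x u - glin C y u = (utility u C x - utility u C y) *+ #|C|.
  by rewrite !glin_utility // -sumrB -sumr_const; apply: eq_bigr => z _; ring.
rewrite !glin0 // subrr => /esym/eqP; rewrite mulrn_eq0 subr_eq0.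
by rewrite cards_eq0; case/orP=> [/eqP C0|/eqP //]; rewrite C0 inE in xC.
Qed.

End LinearForm.

Section Softmax.
Context {R : realType} {X : finType}.

Definition softmax (C : {set X}) (a : X -> R) (x : X) : R :=
  expR (a x) / \sum_(y in C) expR (a y).

Lemma sum_expR_gt0 (C : {set X}) (a : X -> R) (x : X) :
  x \in C -> 0 < \sum_(y in C) expR (a y).
Proof.
move=> xC; rewrite (big_setD1 x xC) /= ltr_pwDl ?expR_gt0 //.
by apply: sumr_ge0 => y _; rewrite ltW ?expR_gt0.
Qed.

Lemma softmax_eqP (C : {set X}) (a b : X -> R) :
  {in C, softmax C a =1 softmax C b} <->
  {in C &, forall x y, b x - a x = b y - a y}.
Proof.
have Z_neq0 (c : X -> R) x : x \in C -> \sum_(y in C) expR (c y) != 0.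
  by move=> xC; apply: lt0r_neq0; apply: sum_expR_gt0 xC.
split=> [same x y xC yC | shift x xC].
  suff expR_shift z : z \in C ->
      expR (b z - a z) = (\sum_(t in C) expR (b t)) / \sum_(t in C) expR (a t).
    by apply: expR_inj; rewrite !expR_shift.
  move=> zC; apply/eqP; rewrite expRB eqr_div ?expR_eq0 ?(Z_neq0 _ z) //.
  by rewrite eq_sym mulrC -eqr_div ?(Z_neq0 _ z) ?expR_eq0 //; apply/eqP/same.
have bE y : y \in C -> expR (b y) = expR (a y) * expR (b x - a x).
  by move=> yC; rewrite -expRD -(shift y x yC xC) addrC subrK.
rewrite /softmax (eq_bigr _ bE) -mulr_suml bE // -mulf_div.
by rewrite divff ?expR_eq0 ?mulr1.
Qed.

End Softmax.

Section OffDiagonal.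
Context {X : finType}.

Lemma uparB {R : zmodType} (u u' : offdiag X -> R) (a b : X) :
  upar (fun d => u' d - u d) a b = upar u' a b - upar u a b.
Proof. by rewrite /upar; case: insubP => [d _ _|_]; rewrite ?subr0. Qed.

Lemma upar_sum_indicator {R : pzRingType} (w : offdiag X -> R) (a b : X) :
  \sum_d w d * (if (a, b) == val d then 1 else 0 : int)%:~R = upar w a b.
Proof.
rewrite /upar; case: insubP => [d0 _ d0E | offdiag_ab].
  rewrite (bigD1 d0) //= -d0E eqxx mulr1 big1 ?addr0 // => d /negbTE d_neq.
  by rewrite (inj_eq val_inj) eq_sym d_neq mulr0.
apply: big1 => d _; case: eqP => [abE|]; last by rewrite mulr0.
by move: offdiag_ab; rewrite abE (valP d).
Qed.

Lemma utility_upar1 {R : pzRingType} (C : {set X}) (x : X) :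
  x \in C -> utility (upar (fun _ => 1 : R)) C x = (#|C|.-1)%:R.
Proof.
move=> xC; rewrite /utility (eq_bigr (fun _ => 1)); last first.
  move=> z; rewrite in_setD1 => /andP [zx _].
  by rewrite /upar; case: insubP => //=; rewrite eq_sym zx.
by rewrite sumr_const (cardsD1 x C) xC.
Qed.

Lemma cdmP_eqP {R : realType} (u u' : offdiag X -> R) (C : {set X}) :
  {in C, cdmP u C =1 cdmP u' C} <->
  (forall x, x \in C -> glin C x (upar (fun d => u' d - u d)) = 0).
Proof.
have utilityB x : utility (upar (fun d => u' d - u d)) C x =
    utility (upar u') C x - utility (upar u) C x.
  by rewrite /utility -sumrB; apply: eq_bigr => z _; rewrite uparB.
rewrite glin_eq0P; split=> [/softmax_eqP shift x y xC yC | shift].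
  by rewrite !utilityB; apply: shift.
by apply/softmax_eqP => x y xC yC; rewrite -!utilityB; apply: shift.
Qed.

Lemma card_offdiag : #|{: offdiag X}| = (#|X| * (#|X| - 1))%N.
Proof.
have card_diag : #|[pred p : X * X | p.1 == p.2]| = #|X|.
  rewrite -(card_image (f := fun x : X => (x, x))); last by move=> x y [].
  apply: eq_card => -[a b]; apply/idP/imageP => [|[c _ [-> ->]]]; last first.
    by rewrite inE /=.
  by rewrite inE /= => /eqP ->; exists b.
have := cardC [pred p : X * X | p.1 == p.2].
by rewrite card_sig card_prod card_diag mulnBr muln1 => <-; rewrite addKn.
Qed.

End OffDiagonal.

Section KernelLine.
Context {F : fieldType}.

Lemma submx_const1P n (v : 'rV[F]_n) :
  reflect (exists a, forall j, v 0 j = a) (v <= (const_mx 1 : 'rV_n))%MS.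
Proof.
apply: (iffP submxP) => [[D ->] | [a vE]].
  by exists (D 0 0) => j; rewrite !mxE big_ord1 !mxE mulr1.
by exists (a%:M); apply/rowP => j; rewrite vE mul_scalar_mx !mxE mulr1.
Qed.

Lemma ker_sub_lineP m n (B : 'M[F]_(n, m)) (o : 'rV_n) :
  o != 0 -> o *m B = 0 ->
  (forall v : 'rV_n, v *m B = 0 -> (v <= o)%MS) <-> \rank B = n.-1.
Proof.
move=> o_neq0 /sub_kermxP o_ker.
have rank_o : \rank o = 1%N.
  by apply/eqP; rewrite eqn_leq rank_leq_row lt0n mxrank_eq0.
have n_gt0 : (0 < n)%N by rewrite -rank_o rank_leq_col.
have [_ ker_eq] := mxrank_leqif_sup o_ker; rewrite rank_o mxrank_ker in ker_eq.
transitivity (kermx B <= o)%MS.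
  split=> [line | ker_o v /sub_kermxP v_ker]; last exact: submx_trans ker_o.
  by apply/rV_subP => v /sub_kermxP; apply: line.
rewrite -ker_eq; split=> [/eqP | rankB]; first by lia.
by apply/eqP; lia.
Qed.

Lemma ker_sub_const1P m n (B : 'M[F]_(n, m)) :
  (const_mx 1 : 'rV_n) *m B = 0 ->
  (forall v : 'rV_n, v *m B = 0 -> (v <= (const_mx 1 : 'rV_n))%MS) <->
  \rank B = n.-1.
Proof.
case: n B => [|n] B one_ker.
  split=> [_ | _ v _]; first by apply/eqP; rewrite -leqn0 rank_leq_row.
  by rewrite thinmx0 sub0mx.
apply: ker_sub_lineP one_ker; apply/eqP => /rowP /(_ ord0) /eqP.
by rewrite !mxE oner_eq0.
Qed.

End KernelLine.

Section GmatKernel.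
Context {X : finType} (S : {set {set X}}).

Local Notation G R := (map_mx (fun k : int => k%:~R : R) (Gmat S)).

Lemma row_mul_Gmat_tr {R : pzRingType} (w : offdiag X -> R)
    (i : 'I_#|{: rowidx X S}|) :
  (\row_j w (enum_val j) *m (G R)^T) 0 i =
  glin (val (enum_val i)).1 (val (enum_val i)).2 (upar w).
Proof.
rewrite mxE (reindex enum_rank) /=; last exact/onW_bij/enum_rank_bij.
under eq_bigr => d _ do
  rewrite !mxE enum_rankK /gvec -[_ * _]/((w d \*o intr) _) raddf_glin.
rewrite -glin_sum; apply: eq_glin => a b.
by rewrite -upar_sum_indicator; apply: eq_bigr.
Qed.

Lemma Gmat_kerP {R : pzRingType} (w : offdiag X -> R) :
  \row_j w (enum_val j) *m (G R)^T = 0 <->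
  (forall C x, C \in S -> x \in C -> glin C x (upar w) = 0).
Proof.
split=> [w_ker C x CS xC | glin0].
  have Cx : ((C, x).1 \in S) && ((C, x).2 \in (C, x).1) by rewrite /= CS xC.
  move/rowP: w_ker => /(_ (enum_rank (Sub (C, x) Cx : rowidx X S))).
  by rewrite row_mul_Gmat_tr enum_rankK mxE.
apply/rowP => i; rewrite row_mul_Gmat_tr mxE.
by case: (enum_val i) => -[C x] /= /andP [CS xC]; apply: glin0.
Qed.

Lemma const1_Gmat_ker {R : numDomainType} :
  (const_mx 1 : 'rV[R]_#|{: offdiag X}|) *m (G R)^T = 0.
Proof.
have -> : const_mx 1 = \row_j 1 :> 'rV[R]_#|{: offdiag X}|.
  by apply/rowP => j; rewrite !mxE.
apply/(Gmat_kerP (fun _ => 1)) => C x _; move: x.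
by apply/glin_eq0P => x y xC yC; rewrite !utility_upar1.
Qed.

Lemma cdmP_eq_kerP {R : realType} (u u' : offdiag X -> R) :
  (forall C x, C \in S -> x \in C -> cdmP u C x = cdmP u' C x) <->
  \row_j (u' (enum_val j) - u (enum_val j)) *m (G R)^T = 0.
Proof.
have ker_glin := Gmat_kerP (fun d => u' d - u d).
split=> [same | /ker_glin glin0 C x CS].
  by apply/ker_glin => C x CS; move: x; apply/cdmP_eqP => x; apply: same.
by move: x; apply/cdmP_eqP => y; apply: glin0.
Qed.

Lemma identifiable_kerP {R : realType} :
  (forall u u' : offdiag X -> R,
     (forall C x, C \in S -> x \in C -> cdmP u C x = cdmP u' C x) ->
     exists alpha : R, forall d, u' d - u d = alpha) <->
  (forall v : 'rV[R]_#|{: offdiag X}|,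
     v *m (G R)^T = 0 -> (v <= (const_mx 1 : 'rV_#|{: offdiag X}|))%MS).
Proof.
split=> [identifiable v v_ker | ker_const u u' /cdmP_eq_kerP /ker_const].
  pose w d := v 0 (enum_rank d).
  have vE : v = \row_j (w (enum_val j) - 0).
    by apply/rowP => j; rewrite mxE subr0 /w enum_valK.
  rewrite vE -(cdmP_eq_kerP (fun=> 0)) in v_ker.
  have [alpha walpha] := identifiable _ _ v_ker.
  by apply/submx_const1P; exists alpha => j; rewrite vE mxE.
move/submx_const1P => [alpha const_alpha]; exists alpha => d.
by rewrite -(const_alpha (enum_rank d)) mxE enum_rankK.
Qed.

End GmatKernel.

Theorem lemma2 (R : realType) (X : finType) (S : {set {set X}})
    (hS : forall C, C \in S -> (2 <= #|C|)%N) :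
  (forall u u' : offdiag X -> R,
     (forall C x, C \in S -> x \in C -> cdmP u C x = cdmP u' C x) ->
     exists alpha : R, forall d, u' d - u d = alpha)
  <->
  \rank (map_mx (fun k : int => k%:~R : R) (Gmat S)) = (#|X| * (#|X| - 1) - 1)%N.
Proof.
rewrite identifiable_kerP -card_offdiag -mxrank_tr subn1.
exact/ker_sub_const1P/const1_Gmat_ker.
Qed.
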